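(* Let $\{X,Y\}$ be a partition of $\mathbb{R}$ into two infinite subsets, let $f$ be a two-point selection on $X$ and $g$ a two-point selection on $Y$. Define $h=f\oplus g$ on $[\mathbb{R}]^2$ by $h(\{x,y\})=x$ if $x\in X$ and $y\in Y$; $h(\{x,y\})=f(\{x,y\})$ if $x,y\in X$; $h(\{x,y\})=g(\{x,y\})$ if $x,y\in Y$. Then $$\mathcal{B}_{f\oplus g}(\mathbb{R}) = \mathcal{B}_f(X)\oplus\mathcal{B}_g(Y),$$ where for $\sigma$-algebras $\mathcal{A}$ on $X$ and $\mathcal{B}$ on $Y$, $\mathcal{A}\oplus\mathcal{B}=\{A\cup B: A\in\mathcal{A},\ B\in\mathcal{B}\}$.
   Context: For a set $Z$, $[Z]^2$ is the set of two-element subsets of $Z$; a two-point selection on $Z$ is a map $f:[Z]^2\to Z$ with $f(F)\in F$. Write $r<_f s$ if $f(\{r,s\})=r$, and $(\leftarrow,r)_f=\{x\in Z: x<_f r\}$, $(r,\rightarrow)_f=\{x\in Z: r<_f x\}$. The topology $\tau_f$ on $Z$ is generated (as a subbase) by all these sets, and $\mathcal{B}_f(Z)$ is the $\sigma$-algebra on $Z$ generated by $\tau_f$. *)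

From HB Require Import structures.
From mathcomp Require Import all_boot all_order all_algebra.
From mathcomp Require Import boolp classical_sets cardinality reals.
From mathcomp Require Import measurable_structure.
Set Implicit Arguments. Unset Strict Implicit. Unset Printing Implicit Defensive.
Local Open Scope classical_set_scope.

Section TwoPoint.
Variable T : Type.

(* A two-point selection on Z, represented as a symmetric binary function:
   f x y is f({x,y}) for distinct x y in Z. *)
Definition two_point_selection (Z : set T) (f : T -> T -> T) : Prop :=
  forall x y, Z x -> Z y -> x <> y -> (f x y = x \/ f x y = y) /\ f x y = f y x.

Definition sel_lt (Z : set T) (f : T -> T -> T) (r s : T) : Prop :=
  Z r /\ Z s /\ r <> s /\ f r s = r.

Definition left_ray (Z : set T) f (r : T) : set T := [set x | sel_lt Z f x r].
Definition right_ray (Z : set T) f (r : T) : set T := [set x | sel_lt Z f r x].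

Definition sel_subbase (Z : set T) f : set (set T) :=
  [set A | exists r, Z r /\ (A = left_ray Z f r \/ A = right_ray Z f r)].

(* the topology on Z generated by the subbase S: unions of finite
   intersections (the empty intersection being Z) of members of S *)
Definition gen_topology (Z : set T) (S : set (set T)) : set (set T) :=
  [set U | U `<=` Z /\ forall x, U x -> exists s : seq (set T),
     (forall A, A \in s -> S A) /\
     (Z `&` \bigcap_(A in [set` s]) A) x /\
     (Z `&` \bigcap_(A in [set` s]) A) `<=` U].

Definition tau_sel (Z : set T) f : set (set T) := gen_topology Z (sel_subbase Z f).

Definition borel_sel (Z : set T) f : set (set T) := <<s Z, tau_sel Z f >>.

Definition sigma_sum (A B : set (set T)) : set (set T) :=
  [set C | exists U V, A U /\ B V /\ C = U `|` V].

Definition sel_sum (X : set T) (f g : T -> T -> T) (x y : T) : T :=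
  if `[< X x >] then (if `[< X y >] then f x y else x)
  else (if `[< X y >] then y else g x y).
End TwoPoint.

From HB Require Import structures.
From mathcomp Require Import all_boot all_order all_algebra.
From mathcomp Require Import boolp classical_sets cardinality reals.
From mathcomp Require Import measurable_structure.
Set Implicit Arguments. Unset Strict Implicit. Unset Printing Implicit Defensive.
Local Open Scope classical_set_scope.

(* h is the ordinal sum of f and g: X lies entirely below Y and h agrees with
   f on X and with g on Y.  Hence X and Y are convex for <_h, so the subspace
   topologies induced by tau_h on X and Y are tau_f and tau_g; splitting an
   h-open set along X and Y gives B_h(R) <= B_f(X) (+) B_g(Y).  Conversely X is
   h-Borel: it is the h-open union of the rays (<-, r)_h with r in X, plus at
   most its h-maximum, and points are h-closed.  The Borel sets of a subspace
   generated by the trace of a topology are traces of Borel sets, so B_f(X) and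
   B_g(Y) lie in B_h(R). *)

Section generated_topology.
Variables (T : Type) (Z : set T) (S : set (set T)).
Local Notation op := (gen_topology Z S).

Lemma gen_topology0 : op set0.
Proof. by split. Qed.

Lemma gen_topologyT : op Z.
Proof.
split=> // x Zx; exists [::]; rewrite set_nil bigcap_set0 setIT.
by split=> [A|]; [rewrite inE|split].
Qed.

Lemma gen_topology_subbase A : S A -> op (Z `&` A).
Proof.
move=> SA; split=> [x []//|x ZAx]; exists [:: A].
by rewrite set_cons1 bigcap_set1; split=> [B|]; [rewrite inE => /eqP->|split].
Qed.

Lemma gen_topologyI U V : op U -> op V -> op (U `&` V).
Proof.
move=> [UZ oU] [_ oV]; split=> [x [/UZ//]|x [Ux Vx]].
have [s [sS [sx sU]]] := oU x Ux; have [t [tS [tx tV]]] := oV x Vx.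
have st : Z `&` \bigcap_(A in [set` s ++ t]) A =
    (Z `&` \bigcap_(A in [set` s]) A) `&` (Z `&` \bigcap_(A in [set` t]) A).
  by rewrite !bigcap_seq big_cat -setIIr.
exists (s ++ t); rewrite st; split; last by split; [split|exact: setISS].
by move=> A; rewrite mem_cat => /orP[/sS|/tS].
Qed.

Lemma gen_topology_bigcup (I : Type) (D : set I) (F : I -> set T) :
  (forall i, D i -> op (F i)) -> op (\bigcup_(i in D) F i).
Proof.
move=> oF; split=> [x [i Di]|x [i Di Fix]].
  by case: (oF i Di) => FZ _ /FZ.
have [s [sS [sx sF]]] := (oF i Di).2 x Fix.
by exists s; split=> //; split=> // y /sF Fiy; exists i.
Qed.

Lemma gen_topologyU U V : op U -> op V -> op (U `|` V).
Proof.
move=> oU oV; rewrite -(bigcup_set1 id U) -(bigcup_set1 id V) -bigcup_setU.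
by apply: gen_topology_bigcup => W [->|->].
Qed.

Lemma gen_topology_min (P : set (set T)) :
  P Z -> setI_closed P -> (forall F, F `<=` P -> P (\bigcup_(A in F) A)) ->
  (forall A, S A -> P (Z `&` A)) -> op `<=` P.
Proof.
move=> PZ PI PU PS U [_ oU].
have Pbasic (s : seq (set T)) :
    (forall A, A \in s -> S A) -> P (Z `&` \bigcap_(A in [set` s]) A).
  rewrite bigcap_seq; elim: s => [_|A s IH sS]; first by rewrite big_nil setIT.
  rewrite big_cons setIIr; apply: PI; first by apply/PS/sS; rewrite mem_head.
  by apply: IH => B Bs; apply: sS; rewrite inE Bs orbT.
pose basic B := exists2 s : seq (set T), (forall A, A \in s -> S A) &
  B = Z `&` \bigcap_(A in [set` s]) A.
suff -> : U = \bigcup_(B in [set B | basic B /\ B `<=` U]) B.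
  by apply: PU => _ [[s sS ->] _]; exact: Pbasic.
apply/seteqP; split=> [x Ux|x [B [_ BU] /BU]//].
have [s [sS [sx sU]]] := oU x Ux.
by exists (Z `&` \bigcap_(A in [set` s]) A) => //; split=> //; exists s.
Qed.

End generated_topology.

Section subspace_topology.
Variables (T : Type) (Z W : set T) (S1 S2 : set (set T)).
Hypothesis WZ : W `<=` Z.

Lemma strace_gen_topology_sub : strace S1 W `<=` gen_topology W S2 ->
  strace (gen_topology Z S1) W `<=` gen_topology W S2.
Proof.
move=> S12 _ [O + <-]; move: O.
apply: (@gen_topology_min _ _ _ [set U | gen_topology W S2 (U `&` W)]).
- by rewrite /= setIidr //; exact: gen_topologyT.
- move=> U V oU oV; rewrite /= -[W in _ `&` W]setIid setIACA.
  exact: gen_topologyI.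
- move=> F FP; rewrite /= setI_bigcupl; exact: gen_topology_bigcup.
- move=> A S1A; rewrite /= -setIA setIC -setIA (setIidl WZ).
  by apply: S12; exists A.
Qed.

Lemma gen_topology_sub_strace : S2 `<=` strace S1 W ->
  gen_topology W S2 `<=` strace (gen_topology Z S1) W.
Proof.
move=> S21; apply: gen_topology_min.
- by exists Z; [exact: gen_topologyT | exact: setIidr WZ].
- move=> _ _ [U oU <-] [V oV <-]; exists (U `&` V); first exact: gen_topologyI.
  by rewrite setIACA setIid.
- move=> F FP.
  exists (\bigcup_(U in [set U | gen_topology Z S1 U /\ F (U `&` W)]) U).
    by apply: gen_topology_bigcup => U [].
  rewrite setI_bigcupl; apply/seteqP; split=> [x [U [_ FUW] UWx]|x [B FB Bx]].
    by exists (U `&` W).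
  by have [U oU UWB] := FP B FB; exists U; [split; rewrite ?UWB|rewrite UWB].
- move=> A /S21 [B S1B <-]; exists (Z `&` B); first exact: gen_topology_subbase.
  by rewrite setIAC (setIidr WZ) setICA setIid setIC.
Qed.

Lemma strace_gen_topology : S2 `<=` strace S1 W ->
  strace S1 W `<=` gen_topology W S2 ->
  strace (gen_topology Z S1) W = gen_topology W S2.
Proof.
move=> S21 S12; apply/seteqP; split.
  exact: strace_gen_topology_sub.
exact: gen_topology_sub_strace.
Qed.

End subspace_topology.

Lemma g_sigma_setU T (D : set T) (G : set (set T)) : setU_closed <<s D, G>>.
Proof.
move=> A B mA mB; rewrite -bigcup2E.
apply: sigma_algebra_bigcup => -[|[|n]] //=.
exact: sigma_algebra0.
Qed.

Lemma g_sigma_setI T (G : set (set T)) : setI_closed <<s G>>.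
Proof.
have GT (A : set T) : <<s G>> A -> A `<=` setT by [].
by have [] := (sigma_algebraP GT).1 (smallest_sigma_algebra setT G).
Qed.

Lemma g_sigma_sub T (D : set T) (G : set (set T)) :
  (forall A, G A -> A `<=` D) -> forall A, <<s D, G>> A -> A `<=` D.
Proof.
move=> GD; apply: smallest_sub => //; split=> // F FD x [n _]; exact: FD.
Qed.

Lemma g_sigma_strace_sub T (G : set (set T)) (W : set T) :
  <<s G>> W -> <<s W, strace G W>> `<=` <<s G>>.
Proof.
move=> mW; have GW : strace G W `<=` strace <<s G>> W.
  apply: subset_strace; exact: sub_sigma_algebra.
have /subset_trans : <<s W, strace G W>> `<=` strace <<s G>> W.
  exact: smallest_sub (sigma_algebra_strace _ _) GW.
by apply=> _ [A mA <-]; exact: g_sigma_setI.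
Qed.

Lemma sigma_algebra_sigma_sum T (X : set T) (A B : set (set T)) :
  sigma_algebra X A -> sigma_algebra (~` X) B ->
  (forall U, A U -> U `<=` X) -> (forall V, B V -> V `<=` ~` X) ->
  sigma_algebra setT (sigma_sum A B).
Proof.
move=> [A0 AD AU] [B0 BD BU] AX BX; split.
- by exists set0, set0; rewrite setU0.
- move=> _ [U [V [AU' [BV ->]]]]; exists (X `\` U), (~` X `\` V).
  split; first exact: AD.
  split; first exact: BD.
  apply/seteqP; split=> [x [_ UVx]|x [[Xx Ux]|[Xx Vx]]].
  + by have [Xx|Xx] := pselect (X x); [left|right]; split=> // ?; apply: UVx;
      [left|right].
  + by split=> // -[//|/(BX _ BV)].
  + by split=> // -[/(AX _ AU')|//].
- move=> F AF; have /choice[p Fp] : forall n, exists p : set T * set T,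
    [/\ A p.1, B p.2 & F n = p.1 `|` p.2].
    by move=> n; have [U [V [AU' [BV ->]]]] := AF n; exists (U, V).
  exists (\bigcup_n (p n).1), (\bigcup_n (p n).2); split.
    by apply: AU => n; case: (Fp n).
  split; first by apply: BU => n; case: (Fp n).
  by rewrite -bigcupU; apply: eq_bigcupr => n _; case: (Fp n).
Qed.

Section selection_rays.
Variables (T : Type) (Z : set T) (f : T -> T -> T).

Lemma tau_sel_left_ray r : Z r -> tau_sel Z f (left_ray Z f r).
Proof.
move=> Zr; rewrite -(@setIidr _ Z (left_ray Z f r)) => [|x []//].
by apply: gen_topology_subbase; exists r; split=> //; left.
Qed.

Lemma tau_sel_right_ray r : Z r -> tau_sel Z f (right_ray Z f r).
Proof.
move=> Zr; rewrite -(@setIidr _ Z (right_ray Z f r)) => [|x [_ []]//].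
by apply: gen_topology_subbase; exists r; split=> //; right.
Qed.

End selection_rays.

Section selection_topology.
Variables (T : Type) (Z : set T) (f : T -> T -> T).
Hypothesis fsel : two_point_selection Z f.

Lemma sel_lt_asym x y : sel_lt Z f x y -> ~ sel_lt Z f y x.
Proof.
move=> [Zx [Zy [xy fxy]]] [_ [_ [_ fyx]]]; have [_ fC] := fsel Zx Zy xy.
by apply: xy; rewrite -[LHS]fxy -[RHS]fyx.
Qed.

Lemma sel_lt_total x y : Z x -> Z y -> x <> y ->
  sel_lt Z f x y \/ sel_lt Z f y x.
Proof.
move=> Zx Zy xy; have [[fx|fy] fC] := fsel Zx Zy xy; [left|right].
  by do !split.
by do !split=> //; [move=> /esym|rewrite -fC].
Qed.

Lemma tau_sel_setD1 m : Z m -> tau_sel Z f (Z `\` [set m]).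
Proof.
move=> Zm; have -> : Z `\` [set m] = left_ray Z f m `|` right_ray Z f m.
  apply/seteqP; split=> [x [Zx xm]|x [[Zx [_ [xm _]]]|[_ [Zx [mx _]]]]] //.
    by have [|] := sel_lt_total Zx Zm xm; [left|right].
  by split=> // xm; apply: mx.
by apply: gen_topologyU; [exact: tau_sel_left_ray|exact: tau_sel_right_ray].
Qed.

Lemma borel_sel_down_closed A : A `<=` Z ->
  (forall x r, A r -> sel_lt Z f x r -> A x) -> borel_sel Z f A.
Proof.
move=> AZ Adown; pose O := \bigcup_(r in A) left_ray Z f r.
have oO : tau_sel Z f O.
  by apply: gen_topology_bigcup => r /AZ; exact: tau_sel_left_ray.
have OA : O `<=` A by move=> x [r Ar]; exact: Adown.
rewrite -(setDUK OA); apply: g_sigma_setU; first exact: sub_sigma_algebra.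
(* A `\` O contains at most the <_f-maximum of A. *)
have [->|/set0P[m [Am Om]]] := eqVneq (A `\` O) set0.
  exact: sigma_algebra0.
have -> : A `\` O = Z `\` (Z `\` [set m]).
  rewrite setDD setIidr => [|x ->]; last exact: AZ _ Am.
  apply/seteqP; split=> [x [Ax Ox]|x ->//]; apply: contrapT => xm.
  by have [lt|lt] := sel_lt_total (AZ _ Ax) (AZ _ Am) xm; [apply: Ox|apply: Om];
    [exists m|exists x].
apply: sigma_algebraCD; apply: sub_sigma_algebra.
exact: tau_sel_setD1 (AZ _ Am).
Qed.

Lemma strace_tau_sel (W : set T) (k : T -> T -> T) : W `<=` Z ->
  (forall x y, W x -> W y -> sel_lt Z f x y <-> sel_lt W k x y) ->
  (forall r, Z r -> ~ W r ->
    W `<=` left_ray Z f r \/ W `<=` right_ray Z f r) ->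
  strace (tau_sel Z f) W = tau_sel W k.
Proof.
move=> WZ agree convex.
have left_trace r : W r -> left_ray Z f r `&` W = left_ray W k r.
  move=> Wr; apply/seteqP; split=> [x [xr Wx]|x xr]; first exact/agree.
  by have Wx := xr.1; split=> //; apply/agree.
have right_trace r : W r -> right_ray Z f r `&` W = right_ray W k r.
  move=> Wr; apply/seteqP; split=> [x [rx Wx]|x rx]; first exact/agree.
  by have Wx := rx.2.1; split=> //; apply/agree.
apply: strace_gen_topology => //.
  move=> _ [r [Wr [->|->]]].
    exists (left_ray Z f r); last exact: left_trace.
    by exists r; split; [exact: WZ|left].
  exists (right_ray Z f r); last exact: right_trace.
  by exists r; split; [exact: WZ|right].
move=> _ [_ [r [Zr [->|->]]] <-]; have [Wr|Wr] := pselect (W r).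
- by rewrite left_trace //; exact: tau_sel_left_ray.
- have [Wl|Wg] := convex r Zr Wr.
    by rewrite setIidr //; exact: gen_topologyT.
  rewrite (_ : _ `&` _ = set0); first exact: gen_topology0.
  by apply/seteqP; split=> x // [xr /Wg]; exact: sel_lt_asym.
- by rewrite right_trace //; exact: tau_sel_right_ray.
- have [Wl|Wg] := convex r Zr Wr; last first.
    by rewrite setIidr //; exact: gen_topologyT.
  rewrite (_ : _ `&` _ = set0); first exact: gen_topology0.
  by apply/seteqP; split=> x // [rx /Wl]; exact: sel_lt_asym.
Qed.

End selection_topology.

Section selection_sum.
Variables (T : Type) (X : set T) (f g : T -> T -> T).
Local Notation h := (sel_sum X f g).

Lemma sel_sumXX x y : X x -> X y -> h x y = f x y.
Proof. by move=> Xx Xy; rewrite /sel_sum (asboolT Xx) (asboolT Xy). Qed.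

Lemma sel_sumXN x y : X x -> ~ X y -> h x y = x.
Proof. by move=> Xx Xy; rewrite /sel_sum (asboolT Xx) (asboolF Xy). Qed.

Lemma sel_sumNX x y : ~ X x -> X y -> h x y = y.
Proof. by move=> Xx Xy; rewrite /sel_sum (asboolF Xx) (asboolT Xy). Qed.

Lemma sel_sumNN x y : ~ X x -> ~ X y -> h x y = g x y.
Proof. by move=> Xx Xy; rewrite /sel_sum (asboolF Xx) (asboolF Xy). Qed.

Lemma sel_lt_sel_sum_cut x y : X x -> ~ X y -> sel_lt setT h x y.
Proof.
move=> Xx Xy; do !split; last exact: sel_sumXN.
by move=> xy; apply: Xy; rewrite -xy.
Qed.

Lemma sel_lt_sel_sumX x y : X x -> X y ->
  sel_lt setT h x y <-> sel_lt X f x y.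
Proof. by move=> Xx Xy; rewrite /sel_lt sel_sumXX //; split=> -[_ [_ ?]]. Qed.

Lemma sel_lt_sel_sumN x y : ~ X x -> ~ X y ->
  sel_lt setT h x y <-> sel_lt (~` X) g x y.
Proof. by move=> Xx Xy; rewrite /sel_lt sel_sumNN //; split=> -[_ [_ ?]]. Qed.

Hypotheses (fsel : two_point_selection X f)
  (gsel : two_point_selection (~` X) g).

Lemma sel_sum_two_point_selection : two_point_selection setT h.
Proof.
move=> x y _ _ xy.
have [Xx|Xx] := pselect (X x); have [Xy|Xy] := pselect (X y).
- by rewrite !sel_sumXX //; exact: fsel.
- by rewrite sel_sumXN // sel_sumNX //; split; [left|].
- by rewrite sel_sumNX // sel_sumXN //; split; [right|].
- by rewrite !sel_sumNN //; exact: gsel.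
Qed.

Lemma strace_tau_sel_sumX : strace (tau_sel setT h) X = tau_sel X f.
Proof.
apply: (strace_tau_sel sel_sum_two_point_selection) => //.
  exact: sel_lt_sel_sumX.
by move=> r _ Xr; left=> x Xx; exact: sel_lt_sel_sum_cut.
Qed.

Lemma strace_tau_sel_sumN : strace (tau_sel setT h) (~` X) = tau_sel (~` X) g.
Proof.
apply: (strace_tau_sel sel_sum_two_point_selection) => //.
  exact: sel_lt_sel_sumN.
by move=> r _ /contrapT Xr; right=> x Xx; exact: sel_lt_sel_sum_cut.
Qed.

Lemma borel_sel_sumX : borel_sel setT h X.
Proof.
apply: (borel_sel_down_closed sel_sum_two_point_selection) => // x r Xr xr.
apply: contrapT => Xx.
exact: (sel_lt_asym sel_sum_two_point_selection xr (sel_lt_sel_sum_cut Xr Xx)).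
Qed.

End selection_sum.

Theorem theorem3p4 (R : realType) (X Y : set R) (f g : R -> R -> R) :
  X `&` Y = set0 -> X `|` Y = setT ->
  ~ finite_set X -> ~ finite_set Y ->
  two_point_selection X f -> two_point_selection Y g ->
  borel_sel setT (sel_sum X f g) = sigma_sum (borel_sel X f) (borel_sel Y g).
Proof.
move=> XY0 XYT _ _ fsel.
have -> : Y = ~` X.
  apply/seteqP; split; first by apply/disjoints_subset; rewrite setIC.
  by apply/subsets_disjoint; rewrite -setCU XYT setCT.
move=> gsel.
have trX := strace_tau_sel_sumX fsel gsel.
have trY := strace_tau_sel_sumN fsel gsel.
have BX := borel_sel_sumX fsel gsel.
apply/seteqP; split.
  apply: smallest_sub.
    by apply: sigma_algebra_sigma_sum; do ?exact: smallest_sigma_algebra;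
      apply: g_sigma_sub => A [].
  move=> U oU; exists (U `&` X), (U `&` ~` X); split.
    by apply: sub_sigma_algebra; rewrite -trX; exists U.
  split; first by apply: sub_sigma_algebra; rewrite -trY; exists U.
  by rewrite -setIUr setUCr setIT.
move=> _ [U [V [BU [BV ->]]]]; apply: g_sigma_setU.
  by rewrite /borel_sel -trX in BU; exact: g_sigma_strace_sub BU.
rewrite /borel_sel -trY in BV; apply: g_sigma_strace_sub BV.
by rewrite -setTD; exact: sigma_algebraCD.
Qed.
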